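(* For $n=1,2,3,\dots$, $$[n]_{\mathbb{Z},\mathbb{N}}=\prod_{b=2}^n b^{\operatorname{ord}_b(n)},$$ where $\operatorname{ord}_b(n)$ is the largest $\alpha\in\mathbb{N}$ such that $b^\alpha\mid n$.
   Context: $\mathbb{N}=\{0,1,2,\dots\}$. For an integer $b\ge0$ and $a\in\mathbb{Z}$ define $\operatorname{ord}_b(a):=\sup\{k\in\mathbb{N}: a\mathbb{Z}\subseteq b^k\mathbb{Z}\}$ (convention $0^0=1$); thus for $b\ge2$ it is the largest $k$ with $b^k\mid a$ ($+\infty$ for $a=0$), $\operatorname{ord}_0(a)=+\infty$ if $a=0$ and $0$ otherwise, and $\operatorname{ord}_1(a)=+\infty$. For nonempty $S\subseteq\mathbb{Z}$, a $b$-ordering of $S$ is a sequence $(a_i)_{i\ge0}$ in $S$ such that for each $i\ge1$, $a_i$ attains $\min_{a'\in S}\sum_{j=0}^{i-1}\operatorname{ord}_b(a'-a_j)$; the $b$-exponent sequence is $\alpha_k(S,b):=\sum_{j=0}^{k-1}\operatorname{ord}_b(a_k-a_j)$ for any $b$-ordering (independent of the choice). For $\mathcal{T}\subseteq\mathbb{N}$ the generalized factorial is $k!_{S,\mathcal{T}}:=\prod_{b\in\mathcal{T}}b^{\alpha_k(S,b)}$, with conventions $b^{+\infty}=0$ for $b=0$ and $b\ge2$, $1^{+\infty}=1$, and $b^0=1$ for all $b\in\mathbb{N}$. The generalized integer is $[n]_{S,\mathcal{T}}:=n!_{S,\mathcal{T}}/(n-1)!_{S,\mathcal{T}}$ for $1\le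 n<|S|$. *)

From mathcomp Require Import all_boot all_order all_algebra.
From Stdlib Require Import ClassicalEpsilon.

Set Implicit Arguments.
Unset Strict Implicit.
Unset Printing Implicit Defensive.

Import GRing.Theory Num.Theory.

Inductive enat := EFin of nat | EInf.

Definition eadd (x y : enat) : enat :=
  match x, y with EFin m, EFin n => EFin (m + n) | _, _ => EInf end.

Definition ele (x y : enat) : bool :=
  match x, y with
  | EFin m, EFin n => (m <= n)%N
  | _, EInf => true
  | EInf, EFin _ => false
  end.

(* ord_b(a) := sup { k in N : a Z ⊆ b^k Z }  (with 0^0 = 1).
   a Z ⊆ b^k Z  iff  b^k | a.  The set is downward closed and contains 0, so
   the sup is +oo if b^(k+1) | a for every k, and otherwise it is the least k
   with b^(k+1) ∤ a. *)
Definition ord (b : nat) (a : int) : enat :=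
  match excluded_middle_informative (exists k, ~~ (b ^ k.+1 %| `|a|)%N) with
  | left H => EFin (ex_minn H)
  | right _ => EInf
  end.

Definition esum (b : nat) (a : nat -> int) (i : nat) (x : int) : enat :=
  \big[eadd/EFin 0]_(j < i) ord b (x - a j)%R.

Definition is_b_ordering (S : int -> Prop) (b : nat) (a : nat -> int) : Prop :=
  (forall i, S (a i)) /\
  (forall i, (0 < i)%N -> forall a', S a' -> ele (esum b a i (a i)) (esum b a i a')).

(* alpha_k(S,b), computed from a (chosen) b-ordering of S
   (junk value EInf if S has no b-ordering). *)
Definition alpha (S : int -> Prop) (b k : nat) : enat :=
  match excluded_middle_informative (exists a, is_b_ordering S b a) with
  | left H => let a := proj1_sig (constructive_indefinite_description _ H) in
              esum b a k (a k)
  | right _ => EInf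
  end.

(* b^e with conventions b^(+oo) = 0 for b = 0 and b >= 2, 1^(+oo) = 1. *)
Definition epow (b : nat) (e : enat) : nat :=
  match e with
  | EFin k => b ^ k
  | EInf => if b == 1%N then 1%N else 0%N
  end.

(* Infinite product over b in N of f b, for f with f b = 1 for all large b
   (junk value 0 otherwise). *)
Definition iprod (f : nat -> nat) : nat :=
  match excluded_middle_informative (exists N, forall b, (N <= b)%N -> f b = 1%N) with
  | left H => \prod_(b < proj1_sig (constructive_indefinite_description _ H)) f b
  | right _ => 0%N
  end.

Definition gen_fact (S : int -> Prop) (T : pred nat) (k : nat) : nat :=
  iprod (fun b => if T b then epow b (alpha S b k) else 1%N).

Definition gen_int (S : int -> Prop) (T : pred nat) (n : nat) : rat :=
  ((gen_fact S T n)%:R / (gen_fact S T n.-1)%:R)%R.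

(* For b >= 2 let (a_i) be any b-ordering of Z.  By induction on i, for every e
   the points a_0, ..., a_(i-1) are spread over the residue classes mod b^e as
   evenly as possible (each class holds i/b^e or i/b^e + 1 of them, rounding
   down), and a_i lies, for every e at once, in a class holding only i/b^e of
   them.  Such a point exists by refining classes one b-adic digit at a time;
   since the b-adic sum at a point x is the sum over e >= 1 of the number of
   j < i with b^e | x - a_j, and each of these counts is at least i/b^e, the
   minimality of a_i forces equality in every term.  Hence
   alpha_k(Z, b) = sum_(e >= 1) floor(k / b^e), and
   floor(n / b^e) - floor((n-1) / b^e) = [b^e | n] gives
   alpha_n - alpha_(n-1) = ord_b(n).  For b = 0 every exponent vanishes, and
   1^alpha = 1, so only 2 <= b <= n contribute to the quotient. *)

From HB Require Import structures.
From mathcomp Require Import all_boot all_order all_algebra.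
From Stdlib Require Import ClassicalEpsilon.
From mathcomp Require Import zify ring.

Set Implicit Arguments.
Unset Strict Implicit.
Unset Printing Implicit Defensive.

Import GRing.Theory Num.Theory.

Lemma eaddA : associative eadd.
Proof. by case=> [x|] [y|] [z|] //=; rewrite addnA. Qed.

Lemma eaddC : commutative eadd.
Proof. by case=> [x|] [y|] //=; rewrite addnC. Qed.

Lemma add0e : left_id (EFin 0) eadd.
Proof. by case. Qed.

HB.instance Definition _ := Monoid.isComLaw.Build enat (EFin 0) eadd eaddA eaddC add0e.

Lemma big_ord_trunc (R : Type) (idx : R) (op : Monoid.law idx) (F : nat -> R) N K :
  (N <= K)%N -> (forall e, (N <= e)%N -> F e = idx) ->
  \big[op/idx]_(e < K) F e = \big[op/idx]_(e < N) F e.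
Proof.
move=> le_NK tail; rewrite -!(big_mkord xpredT F) (big_cat_nat (leq0n N) le_NK) /=.
rewrite [X in op _ X]big1_seq ?Monoid.mulm1 // => e /andP[_].
by rewrite mem_index_iota => /andP[/tail].
Qed.

Lemma ord_0 b : ord b 0 = EInf.
Proof.
rewrite /ord; case: excluded_middle_informative => // ex; exfalso.
by case: ex => k; rewrite dvdn0.
Qed.

Lemma ord0_neq0 (y : int) : y != 0%R -> ord 0 y = EFin 0.
Proof.
move=> y_neq0; have ndvd0 : ~~ (0 ^ 1 %| `|y|)%N by rewrite expn1 dvd0n absz_eq0.
rewrite /ord; case: excluded_middle_informative => [ex|[]]; last by exists 0%N.
by case: ex_minnP => m _ /(_ 0%N ndvd0); rewrite leqn0 => /eqP->.
Qed.

Lemma ord_fin b (y : int) : (1 < b)%N -> y != 0%R ->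
  exists2 m, ord b y = EFin m & forall e, (b ^ e.+1 %| `|y|)%N = (e < m)%N.
Proof.
move=> b_gt1 y_neq0; rewrite /ord; case: excluded_middle_informative => [ex|[]].
  case: ex_minnP => m ndvd_m min_m; exists m => // e.
  case: ltnP => [lt_em|le_me]; last first.
    by apply: contraNF ndvd_m => /(dvdn_trans _); apply; rewrite dvdn_exp2l.
  by apply: contraTT lt_em => /min_m; rewrite -leqNgt.
exists `|y|%N; apply/negP => /dvdn_leq; rewrite absz_gt0 => /(_ y_neq0).
by apply/negP; rewrite -ltnNge (ltn_trans (ltn_expl _ b_gt1)) // ltn_exp2l.
Qed.

Lemma ord_sum_dvdn b K (y : int) : (1 < b)%N -> y != 0%R -> (`|y| < K)%N ->
  ord b y = EFin (\sum_(e < K) (b ^ e.+1 %| `|y|))%N.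
Proof.
move=> b_gt1 y_neq0 lt_yK; have [m -> dvd_m] := ord_fin b_gt1 y_neq0; congr (EFin _).
have le_mK : (m <= K)%N.
  have /dvdn_leq : (b ^ m %| `|y|)%N by case: m dvd_m => // m dvd_m; rewrite dvd_m.
  rewrite absz_gt0 => /(_ y_neq0) le_bm_y.
  exact/ltnW/(leq_ltn_trans (ltnW (ltn_expl m b_gt1)))/(leq_ltn_trans le_bm_y).
rewrite (eq_bigr (fun e : 'I_K => nat_of_bool (e < m)%N)) => [|e _]; last by rewrite dvd_m.
rewrite -(big_mkord xpredT (fun e => nat_of_bool (e < m)%N)) (big_cat_nat (leq0n m) le_mK) /=.
rewrite (eq_big_nat _ _ (F2 := fun=> 1%N)) => [|e /andP[_ ->]] //.
rewrite sum_nat_const_nat subn0 muln1 [X in (_ + X)%N]big1_seq ?addn0 // => e /andP[_].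
by rewrite mem_index_iota => /andP[le_me _]; rewrite ltnNge le_me.
Qed.

Lemma esumS b a i x : esum b a i.+1 x = eadd (esum b a i x) (ord b (x - a i)%R).
Proof. by rewrite /esum big_ord_recr. Qed.

Lemma esum_EInf b a i j : (j < i)%N -> esum b a i (a j) = EInf.
Proof.
elim: i => // i IHi; rewrite ltnS leq_eqVlt esumS => /predU1P[->|/IHi->//].
by rewrite subrr ord_0; case: esum.
Qed.

Definition residue_count (M : nat) (a : nat -> int) (i : nat) (x : int) : nat :=
  \sum_(j < i) (M%:Z %| (x - a j)%R)%Z.

Lemma residue_countS M a i x :
  residue_count M a i.+1 x = (residue_count M a i x + (M%:Z %| (x - a i)%R)%Z)%N.
Proof. by rewrite /residue_count big_ord_recr. Qed.

Lemma esum_residue_count b a i x : (1 < b)%N -> (forall j, (j < i)%N -> x != a j) ->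
  exists N, forall K, (N <= K)%N ->
    esum b a i x = EFin (\sum_(e < K) residue_count (b ^ e.+1) a i x).
Proof.
move=> b_gt1; elim: i => [_|i IHi fresh_x].
  by exists 0%N => K _; rewrite /esum big_ord0 big1 // => e _; rewrite /residue_count big_ord0.
have [|N eqN] := IHi; first by move=> j lt_ji; apply/fresh_x/ltnW.
have xai_neq0 : (x - a i)%R != 0%R by rewrite subr_eq0 fresh_x.
exists (maxn N `|x - a i|.+1) => K; rewrite geq_max => /andP[le_NK lt_K].
rewrite esumS (eqN K) // (ord_sum_dvdn b_gt1 xai_neq0 lt_K) /= -big_split /=.
by congr EFin; apply: eq_bigr => e _; rewrite residue_countS dvdzE absz_nat.
Qed.

Lemma residue_unique (M r s : nat) : (r < M)%N -> (s < M)%N ->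
  (M%:Z %| (r%:Z - s%:Z)%R)%Z -> r = s.
Proof.
move=> lt_rM lt_sM; rewrite -eqz_mod_dvd !modz_small ?lez_nat ?ltz_nat //.
by move/eqP => [].
Qed.

Lemma residue_exists (M : nat) (z : int) : (0 < M)%N ->
  exists r : 'I_M, (M%:Z %| (r%:Z - z)%R)%Z.
Proof.
move=> M_gt0; have M_neq0 : (M%:Z != 0)%R by rewrite eqz_nat -lt0n.
have zM_ge0 := modz_ge0 z M_neq0.
have lt_zM : (`|(z %% M%:Z)%Z| < M)%N.
  by rewrite -ltz_nat gez0_abs // ltz_pmod // ltz_nat.
exists (Ordinal lt_zM); rewrite -eqz_mod_dvd /= gez0_abs //.
by rewrite modz_mod.
Qed.

Lemma sum_dvdz_residues (M : nat) (z : int) : (0 < M)%N ->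
  (\sum_(r < M) (M%:Z %| (r%:Z - z)%R)%Z)%N = 1%N.
Proof.
move=> M_gt0; have [r0 dvd_r0] := residue_exists z M_gt0.
rewrite (bigD1 r0) //= dvd_r0 big1 // => r neq_rr0; apply/eqP; rewrite eqb0.
apply: contra neq_rr0 => dvd_r; apply/eqP/val_inj/(residue_unique (ltn_ord _) (ltn_ord _)).
by rewrite -(subrKA z) rpredD // -opprB rpredN.
Qed.

Section ResidueCount.

Variable a : nat -> int.

Lemma residue_count0 M x : residue_count M a 0 x = 0%N.
Proof. by rewrite /residue_count big_ord0. Qed.

Lemma residue_count_mod1 i x : residue_count 1 a i x = i.
Proof.
rewrite /residue_count (eq_bigr (fun=> 1%N)) => [|j _]; last by rewrite dvd1z.
by rewrite sum_nat_const card_ord muln1.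
Qed.

Lemma residue_count_congr M i x y : (M%:Z %| (x - y)%R)%Z ->
  residue_count M a i x = residue_count M a i y.
Proof.
move=> dvd_xy; apply: eq_bigr => j _.
by rewrite -(subrKA y) rpredDl.
Qed.

Lemma leq_residue_count_dvdn M N i x : (M %| N)%N ->
  (residue_count N a i x <= residue_count M a i x)%N.
Proof.
move=> dvd_MN; apply: leq_sum => j _; case: (boolP (N%:Z %| _)%Z) => //= dvd_N.
by rewrite (dvdz_trans _ dvd_N) // dvdzE !absz_nat.
Qed.

Lemma residue_count_eq0_neq M i x j : residue_count M a i x = 0%N -> (j < i)%N ->
  x != a j.
Proof.
move=> /eqP; rewrite sum_nat_eq0 => /forallP zero lt_ji.
by apply: contraTneq (zero (Ordinal lt_ji)) => /= ->; rewrite subrr dvdz0.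
Qed.

Lemma sum_residue_count M i : (0 < M)%N ->
  (\sum_(r < M) residue_count M a i r%:Z)%N = i.
Proof.
move=> M_gt0; rewrite exchange_big /= (eq_bigr (fun=> 1%N)) => [|j _].
  by rewrite sum_nat_const card_ord muln1.
exact: sum_dvdz_residues.
Qed.

Lemma sum_residue_count_refine M b i x : (0 < M)%N -> (0 < b)%N ->
  (\sum_(t < b) residue_count (M * b) a i (x + (t * M)%N%:Z)%R)%N =
  residue_count M a i x.
Proof.
move=> M_gt0 b_gt0; rewrite exchange_big /=; apply: eq_bigr => j _.
have M_neq0 : (M%:Z != 0)%R by rewrite eqz_nat -lt0n.
have [dvd_M|ndvd_M] /= := boolP (M%:Z %| (x - a j)%R)%Z.
  have [q eq_q] := dvdzP dvd_M; rewrite -(sum_dvdz_residues (- q) b_gt0).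
  apply: eq_bigr => t _.
  have -> : (x + (t * M)%N%:Z - a j = (t%:Z - - q) * M%:Z)%R.
    by rewrite PoszM opprK mulrDl -eq_q; ring.
  by rewrite PoszM (mulrC (Posz M)) dvdz_mul2r.
rewrite big1 // => t _; apply/eqP; rewrite eqb0; apply: contra ndvd_M => dvd_Mb.
rewrite -(addrK (Posz (t * M)) x) addrAC PoszM rpredB ?dvdz_mull //.
by apply: dvdz_trans dvd_Mb; rewrite PoszM dvdz_mulr.
Qed.

End ResidueCount.

Definition balanced (M : nat) (a : nat -> int) (i : nat) : Prop :=
  forall x, (i %/ M <= residue_count M a i x <= (i %/ M).+1)%N.

Section Balanced.

Variable a : nat -> int.

Lemma balanced_step M i : (0 < M)%N -> balanced M a i ->
  residue_count M a i (a i) = (i %/ M)%N -> balanced M a i.+1.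
Proof.
move=> M_gt0 bal exact_ai y; have /andP[lo hi] := bal y.
rewrite residue_countS divnS //; set q := (i %/ M)%N in lo hi exact_ai *.
have [dvd_y|ndvd_y] /= := boolP (M%:Z %| (y - a i)%R)%Z.
  by rewrite (residue_count_congr _ _ dvd_y) exact_ai; case: (_ %| _)%N; lia.
rewrite addn0 (leq_trans hi) ?andbT; last by case: (_ %| _)%N.
have [dvd_i1|] //= := boolP (M %| i.+1)%N.
(* The M classes then lack exactly one point in all to hold q.+1 each, and
   a_i's class already lacks one, so y's class cannot. *)
rewrite add1n ltn_neqAle lo andbT; apply/eqP => count_y.
have i1_eq : i.+1 = (q.+1 * M)%N by rewrite -(divnK dvd_i1) divnS // dvd_i1.
have deficit : (\sum_(r < M) (q.+1 - residue_count M a i r%:Z) = 1)%N.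
  rewrite sumnB => [|r _]; last by have /andP[] := bal r.
  by rewrite sum_residue_count // sum_nat_const card_ord mulnC -i1_eq subSnn.
have [r1 dvd_r1] := residue_exists (a i) M_gt0.
have [r2 dvd_r2] := residue_exists y M_gt0.
have neq_r21 : r2 != r1.
  apply: contra ndvd_y => /eqP eq_r21; rewrite eq_r21 in dvd_r2.
  by rewrite -(subrKA (Posz r1)) -opprB rpredD ?rpredN.
move: deficit; rewrite (bigD1 r1) // (bigD1 r2) //=.
rewrite (residue_count_congr _ _ dvd_r1) (residue_count_congr _ _ dvd_r2).
by rewrite exact_ai count_y subSnn.
Qed.

Lemma refine_least_class M b i x : (0 < M)%N -> (0 < b)%N -> balanced (M * b) a i ->
  residue_count M a i x = (i %/ M)%N ->
  exists t : 'I_b, residue_count (M * b) a i (x + (t * M)%N%:Z)%R = (i %/ (M * b))%N.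
Proof.
move=> M_gt0 b_gt0 bal exact_x.
have [t le_t|gt] := pickP (fun t : 'I_b =>
  residue_count (M * b) a i (x + (t * M)%N%:Z)%R <= i %/ (M * b))%N.
  by exists t; apply/eqP; rewrite eqn_leq le_t; have /andP[] := bal (x + (t * M)%N%:Z)%R.
(* The b classes mod M * b inside the class of x share its i %/ M points. *)
have lower : (b * (i %/ (M * b)).+1 <= i %/ M)%N.
  rewrite -exact_x -(sum_residue_count_refine a i x M_gt0 b_gt0).
  rewrite -[X in (X * _)%N]card_ord -sum_nat_const; apply: leq_sum => t _.
  by rewrite ltnNge gt.
by have := ltn_ceil (i %/ M) b_gt0; rewrite -divnMA mulnC ltnNge lower.
Qed.

Lemma exists_minimal_counts b i : (1 < b)%N -> (forall e, balanced (b ^ e) a i) ->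
  exists x, forall e, residue_count (b ^ e) a i x = (i %/ b ^ e)%N.
Proof.
move=> b_gt1 bal; have b_gt0 := ltnW b_gt1.
have upto E : exists x, forall e, (e <= E)%N -> residue_count (b ^ e) a i x = (i %/ b ^ e)%N.
  elim: E => [|E [x exact_x]].
    by exists 0%R => e; rewrite leqn0 => /eqP->; rewrite residue_count_mod1 divn1.
  have bE_gt0 : (0 < b ^ E)%N by rewrite expn_gt0 b_gt0.
  have bal_E1 : balanced (b ^ E * b) a i by rewrite -expnSr; apply: bal.
  have [t exact_t] := refine_least_class bE_gt0 b_gt0 bal_E1 (exact_x E (leqnn E)).
  exists (x + (t * b ^ E)%N%:Z)%R => e; rewrite leq_eqVlt => /predU1P[->|lt_eE].
    by rewrite expnSr; apply: exact_t.
  rewrite -(exact_x e lt_eE); apply: residue_count_congr.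
  by rewrite addrAC subrr add0r dvdzE !absz_nat; apply/dvdn_mull/dvdn_exp2l.
have [x exact_x] := upto i; exists x => e; have [le_ei|lt_ie] := leqP e i; first exact: exact_x.
rewrite (divn_small (ltn_trans lt_ie (ltn_expl _ b_gt1))); apply/eqP; rewrite -leqn0.
rewrite -(divn_small (ltn_expl i b_gt1)) -(exact_x i (leqnn i)).
exact/leq_residue_count_dvdn/dvdn_exp2l/ltnW.
Qed.

End Balanced.

Section BOrdering.

Variables (b : nat) (a : nat -> int).
Hypotheses (b_gt1 : (1 < b)%N) (a_ord : is_b_ordering (fun _ => True) b a).

Lemma minimal_counts_of_balanced i : (forall e, balanced (b ^ e) a i) ->
  forall e, residue_count (b ^ e) a i (a i) = (i %/ b ^ e)%N.
Proof.
move=> bal e; have [->|i_gt0] := posnP i; first by rewrite residue_count0 div0n.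
have [x exact_x] := exists_minimal_counts b_gt1 bal.
have fresh_x j : (j < i)%N -> x != a j.
  by apply: (@residue_count_eq0_neq _ (b ^ i)); rewrite exact_x divn_small // ltn_expl.
have [Nx eq_x] := esum_residue_count b_gt1 fresh_x.
have min_ai := a_ord.2 i i_gt0 x I.
have fresh_ai j : (j < i)%N -> a i != a j.
  by move=> lt_ji; apply: contraTneq min_ai => ->; rewrite esum_EInf // (eq_x Nx).
have [Na eq_a] := esum_residue_count b_gt1 fresh_ai.
case: e => [|e]; first by rewrite expn0 residue_count_mod1 divn1.
pose K := maxn e.+1 (maxn Nx Na).
move: min_ai; rewrite (eq_x K) ?(eq_a K) ?leq_max ?leqnn ?orbT //= => le_sums.
have lo_ai (f : 'I_K) : true -> (i %/ b ^ f.+1 <= residue_count (b ^ f.+1) a i (a i) ?=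
  iff (i %/ b ^ f.+1 == residue_count (b ^ f.+1) a i (a i)))%N.
  by move=> _; apply: leqif_eq; have /andP[] := bal f.+1 (a i).
have sum_x : (\sum_(f < K) residue_count (b ^ f.+1) a i x = \sum_(f < K) i %/ b ^ f.+1)%N.
  by apply: eq_bigr => f _; apply: exact_x.
(* a_i minimizes a sum that termwise dominates the one at x. *)
have := geq_leqif (leqif_sum lo_ai); rewrite -sum_x le_sums => /esym/forallP.
have lt_eK : (e < K)%N by rewrite leq_max leqnn.
by move=> /(_ (Ordinal lt_eK))/eqP.
Qed.

Lemma b_ordering_balanced i e : balanced (b ^ e) a i.
Proof.
elim: i e => [e x|i IHi e]; first by rewrite residue_count0 div0n.
by apply: balanced_step (IHi e) (minimal_counts_of_balanced IHi e); rewrite expn_gt0 ltnW.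
Qed.

Lemma esum_b_ordering k N : (k < N)%N ->
  esum b a k (a k) = EFin (\sum_(e < N) k %/ b ^ e.+1).
Proof.
move=> lt_kN; have exact_ak := minimal_counts_of_balanced (b_ordering_balanced k).
have fresh_ak j : (j < k)%N -> a k != a j.
  by apply: (@residue_count_eq0_neq _ (b ^ k)); rewrite exact_ak divn_small // ltn_expl.
have [N0 eqN0] := esum_residue_count b_gt1 fresh_ak.
rewrite (eqN0 (maxn N0 N)) ?leq_maxl //; congr (EFin _).
under eq_bigr => e _ do rewrite exact_ak.
apply: (big_ord_trunc (F := fun e => k %/ b ^ e.+1) _ (leq_maxr N0 N)) => e le_Ne.
by apply: divn_small; have := ltn_expl e.+1 b_gt1; lia.
Qed.

End BOrdering.

Lemma residue_count_Posz_block M i x : (0 < M)%N ->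
  residue_count M Posz (i + M) x = (residue_count M Posz i x + 1)%N.
Proof.
move=> M_gt0; rewrite /residue_count big_split_ord /=; congr (_ + _)%N.
rewrite -(sum_dvdz_residues (x - Posz i) M_gt0); apply: eq_bigr => t _.
have -> : (x - Posz (i + t) = - (Posz t - (x - Posz i)))%R by rewrite PoszD; ring.
by rewrite rpredN.
Qed.

Lemma residue_count_Posz_lower M i x : (0 < M)%N ->
  (i %/ M <= residue_count M Posz i x)%N.
Proof.
move=> M_gt0; elim/ltn_ind: i => i IHi.
have [lt_iM|le_Mi] := ltnP i M; first by rewrite divn_small.
rewrite -(subnK le_Mi) residue_count_Posz_block // divnDr // divnn M_gt0 leq_add2r.
by apply: IHi; rewrite ltn_subrL M_gt0 (leq_trans M_gt0).
Qed.

Lemma residue_count_Posz_self M i : (0 < M)%N -> residue_count M Posz i i = (i %/ M)%N.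
Proof.
move=> M_gt0; elim: i => [|i IHi]; first by rewrite residue_count0 div0n.
rewrite divnS // -IHi /residue_count big_ord_recl /= subr0 dvdzE !absz_nat.
congr (_ + _)%N; apply: eq_bigr => j _.
suff -> : (Posz i.+1 - Posz (lift ord0 j) = Posz i - Posz j)%R by [].
by rewrite lift0 !intS; ring.
Qed.

Lemma esum_minimal_counts_le b a i x : (1 < b)%N ->
  (forall e, i %/ b ^ e <= residue_count (b ^ e) a i x)%N ->
  (forall e, residue_count (b ^ e) a i (a i) = i %/ b ^ e)%N ->
  ele (esum b a i (a i)) (esum b a i x).
Proof.
move=> b_gt1 lo_x exact_ai.
have fresh_ai j : (j < i)%N -> a i != a j.
  by apply: (@residue_count_eq0_neq _ (b ^ i)); rewrite exact_ai divn_small // ltn_expl.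
have [j /eqP->|nx] := pickP (fun j : 'I_i => x == a j).
  by rewrite (esum_EInf b a (ltn_ord j)); case: esum.
have fresh_x j : (j < i)%N -> x != a j by move=> lt_ji; apply/negbT/(nx (Ordinal lt_ji)).
have [Nx eq_x] := esum_residue_count b_gt1 fresh_x.
have [Na eq_a] := esum_residue_count b_gt1 fresh_ai.
rewrite (eq_x (maxn Nx Na)) ?(eq_a (maxn Nx Na)) ?leq_maxl ?leq_maxr //=.
by apply: leq_sum => e _; rewrite exact_ai.
Qed.

Lemma Posz_b_ordering b : (1 < b)%N -> is_b_ordering (fun _ => True) b Posz.
Proof.
move=> b_gt1; split=> // i _ x _; apply: esum_minimal_counts_le => // e;
  [apply: residue_count_Posz_lower | apply: residue_count_Posz_self];
  by rewrite expn_gt0 ltnW.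
Qed.

Lemma exists_fresh (a : nat -> int) i : exists x, forall j, (j < i)%N -> x != a j.
Proof.
exists (Posz (\max_(j < i) `|a j|).+1) => j lt_ji.
apply: contraTneq (leq_bigmax (F := fun j : 'I_i => `|a j|%N) (Ordinal lt_ji)) => /= <-.
by rewrite absz_nat -ltnNge.
Qed.

Lemma esum0_fresh a i x : (forall j, (j < i)%N -> x != a j) -> esum 0 a i x = EFin 0.
Proof.
elim: i => [|i IHi] fresh_x; first by rewrite /esum big_ord0.
rewrite esumS IHi => [|j lt_ji]; last exact/fresh_x/ltnW.
by rewrite ord0_neq0 // subr_eq0 fresh_x.
Qed.

Lemma Posz_0_ordering : is_b_ordering (fun _ => True) 0 Posz.
Proof.
split=> // i _ x _; rewrite esum0_fresh; first by case: esum.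
by move=> j lt_ji; rewrite eqz_nat neq_ltn lt_ji orbT.
Qed.

Lemma alphaZ0 k : alpha (fun _ => True) 0 k = EFin 0.
Proof.
rewrite /alpha; case: excluded_middle_informative => [ex|[]]; last first.
  by exists Posz; apply: Posz_0_ordering.
case: constructive_indefinite_description => a [_ a_min] /=.
have [->|k_gt0] := posnP k; first by rewrite /esum big_ord0.
have [x fresh_x] := exists_fresh a k.
by have := a_min k k_gt0 x I; rewrite (esum0_fresh fresh_x); case: esum => [[]|].
Qed.

Lemma alphaZ b k N : (1 < b)%N -> (k < N)%N ->
  alpha (fun _ => True) b k = EFin (\sum_(e < N) k %/ b ^ e.+1).
Proof.
move=> b_gt1 lt_kN; rewrite /alpha; case: excluded_middle_informative => [ex|[]]; last first.
  by exists Posz; apply: Posz_b_ordering.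
by case: constructive_indefinite_description => a a_ord /=; apply: esum_b_ordering.
Qed.

Lemma epow1 x : epow 1 x = 1%N.
Proof. by case: x => [m|] //=; rewrite exp1n. Qed.

Lemma epow_alphaZ_gt0 b k : (0 < epow b (alpha (fun _ => True) b k))%N.
Proof.
case: b => [|[|b]]; first by rewrite alphaZ0.
  by rewrite epow1.
by rewrite (@alphaZ _ _ k.+1) //= expn_gt0.
Qed.

Lemma epow_alphaZ_large b k : (k < b)%N -> epow b (alpha (fun _ => True) b k) = 1%N.
Proof.
case: b => [//|[|b] lt_kb]; first by rewrite epow1.
rewrite (@alphaZ _ _ k.+1) //= big1 // => e _; apply: divn_small.
by apply: (leq_trans lt_kb); rewrite -{1}(expn1 b.+2) leq_exp2l.
Qed.

Lemma iprod_eq (f : nat -> nat) N : (forall b, (N <= b)%N -> f b = 1%N) ->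
  iprod f = (\prod_(b < N) f b)%N.
Proof.
move=> tail_N; rewrite /iprod; case: excluded_middle_informative => [ex|[]]; last by exists N.
case: constructive_indefinite_description => N0 tail_N0 /=.
by rewrite -(big_ord_trunc _ (leq_maxl N0 N) tail_N0) (big_ord_trunc _ (leq_maxr N0 N) tail_N).
Qed.

Lemma gen_factZ k N : (k < N)%N ->
  gen_fact (fun _ => True) (fun _ => true) k =
  (\prod_(2 <= b < N) epow b (alpha (fun _ => True) b k))%N.
Proof.
move=> lt_kN; rewrite /gen_fact (iprod_eq (N := N)) => [|b le_Nb]; last first.
  exact: epow_alphaZ_large (leq_trans lt_kN le_Nb).
rewrite big_geq_mkord /= [RHS]big_mkcond; apply: eq_bigr => -[[|[|b]] lt_bN] _ //=.
  by rewrite alphaZ0.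
by rewrite epow1.
Qed.

Lemma epow_alphaZ_pred b n : (1 < b)%N -> (0 < n)%N ->
  epow b (alpha (fun _ => True) b n) =
  (epow b (alpha (fun _ => True) b n.-1) * epow b (ord b (Posz n)))%N.
Proof.
move=> b_gt1 n_gt0; have lt_pred : (n.-1 < n.+1)%N := leq_ltn_trans (leq_pred n) (ltnSn n).
have n_neq0 : (Posz n != 0)%R by rewrite eqz_nat -lt0n.
rewrite (alphaZ b_gt1 (ltnSn n)) (alphaZ b_gt1 lt_pred) (ord_sum_dvdn b_gt1 n_neq0 (ltnSn n)).
rewrite /= -expnD -big_split /=; congr (_ ^ _)%N; apply: eq_bigr => e _.
have be_gt0 : (0 < b ^ e.+1)%N by rewrite expn_gt0 ltnW.
by rewrite -{1}(prednK n_gt0) (divnS _ be_gt0) (prednK n_gt0) addnC.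
Qed.

Theorem theorem7p3 (n : nat) (hn : (0 < n)%N) :
  gen_int (fun _ : int => True) (fun _ : nat => true) n =
  (((\prod_(2 <= b < n.+1) epow b (ord b (Posz n)))%N)%:R)%R.
Proof.
have lt_pred : (n.-1 < n.+1)%N := leq_ltn_trans (leq_pred n) (ltnSn n).
rewrite /gen_int (gen_factZ (ltnSn n)) (gen_factZ lt_pred).
under eq_big_nat => b /andP[b_gt1 _] do rewrite (epow_alphaZ_pred b_gt1 hn).
rewrite big_split /= natrM mulrAC divff ?mul1r // pnatr_eq0 -lt0n.
by rewrite prodn_gt0 // => b; apply: epow_alphaZ_gt0.
Qed.
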